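(* For every pair of reals $\mu>\lambda\ge 0$ there exists a finite game $G$ (with two agents) and a welfare maximizer $a^*$ with $W(a^* )>0$ such that $G$ is $(\lambda,\mu)$-smooth, $G$ has a unique sink equilibrium (for the best-response process), and $\mathrm{PoS}(G)=0$.
   Context: A finite game $G$ consists of agents $N=\{1,\dots,n\}$, finite nonempty action sets $\mathcal A_i$, joint action set $\mathcal A=\mathcal A_1\times\cdots\times\mathcal A_n$, a welfare function $W:\mathcal A\to\mathbb R_{\ge 0}$ and utility functions $U_i:\mathcal A\to\mathbb R$, $i\in N$. For $a\in\mathcal A$, $a_{-i}$ denotes the actions of all agents other than $i$, and $(b_i,a_{-i})$ is the joint action obtained from $a$ by replacing $a_i$ with $b_i$. Fix $a^*\in\arg\max_{a\in\mathcal A}W(a)$. For $\mu\ge\lambda\ge0$, $G$ is $(\lambda,\mu)$-smooth if $\sum_{i=1}^n\big(U_i(a)-U_i(a^*_i,a_{-i})\big)\le\mu W(a)-\lambda W(a^* )$ for all $a\in\mathcal A$. The best response set of agent $i$ at $a$ is $\mathrm{BR}_i(a)=\arg\max_{b_i\in\mathcal A_i}U_i(b_i,a_{-i})$. The best-response process is the Markov chain on $\mathcal A$ in which, from state $a$, an agent $i$ is chosen uniformly at random from $N$, then $b_i$ is chosen uniformly at random from $\mathrm{BR}_i(a)$, and the next state is $(b_i,a_{-i})$. A sink strongly connected component is a nonempty set $S\subseteq\mathcal A$ such that for all $a,\bar a\in S$ there is a positive-probability path of the chain from $a$ to $\bar a$, and no state outside $S$ is reachable with positive probability from a state of $S$.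 A sink equilibrium is a stationary distribution $\sigma$ of the chain whose support equals a sink strongly connected component; $\mathrm{SE}$ is the set of sink equilibria, and $\mathrm{PoS}(G)=\min_{\sigma\in\mathrm{SE}}\mathbb E_{a\sim\sigma}[W(a)]/W(a^* )$. *)

From HB Require Import structures.
From mathcomp Require Import all_boot all_order all_algebra.
From mathcomp Require Import reals.
Set Implicit Arguments. Unset Strict Implicit. Unset Printing Implicit Defensive.
Import Order.TTheory GRing.Theory Num.Theory.
Local Open Scope ring_scope.

Section Game.
Variable R : realType.
Variable n : nat.
Variable A : 'I_n -> finType.
Local Notation jT := {dffun forall i : 'I_n, A i}.
Variable W : jT -> R.
Variable U : 'I_n -> jT -> R.

Definition upd (a : jT) (i : 'I_n) (c : jT) : jT :=
  [ffun j => if j == i then c j else a j].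

Definition welfare_max (astar : jT) : Prop := forall a, W a <= W astar.

Definition smooth (lambda mu : R) (astar : jT) : Prop :=
  mu >= lambda /\ lambda >= 0 /\
  forall a : jT,
    \sum_(i < n) (U i a - U i (upd a i astar)) <= mu * W a - lambda * W astar.

(* the joint actions (b_i, a_{-i}) with b_i in BR_i(a); this set is in
   bijection with BR_i(a) via b |-> b i *)
Definition BRset (i : 'I_n) (a : jT) : {set jT} :=
  [set b : jT | [forall j, (j != i) ==> (b j == a j)] &&
                [forall c : jT, U i (upd a i c) <= U i b]].

Definition trans (a b : jT) : R :=
  \sum_(i < n) (n%:R)^-1 * (if b \in BRset i a then (#|BRset i a|%:R)^-1 else 0).

Definition reach (a b : jT) : bool := connect [rel x y | 0 < trans x y] a b.

Definition sink_scc (S : {set jT}) : Prop :=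
  S != set0 /\
  (forall a b, a \in S -> b \in S -> reach a b) /\
  (forall a b, a \in S -> reach a b -> b \in S).

Definition stationary (sigma : jT -> R) : Prop :=
  (forall a, 0 <= sigma a) /\ \sum_(a : jT) sigma a = 1 /\
  (forall b, \sum_(a : jT) sigma a * trans a b = sigma b).

Definition support (sigma : jT -> R) : {set jT} := [set a | sigma a != 0].

Definition sink_eq (sigma : jT -> R) : Prop :=
  stationary sigma /\ sink_scc (support sigma).

Definition expW (sigma : jT -> R) : R := \sum_(a : jT) sigma a * W a.

Definition PoS_eq (astar : jT) (p : R) : Prop :=
  (exists sigma, sink_eq sigma /\ expW sigma / W astar = p) /\
  (forall sigma, sink_eq sigma -> p <= expW sigma / W astar).

Definition unique_sink_eq : Prop :=
  exists sigma, sink_eq sigma /\ forall tau, sink_eq tau -> tau = sigma.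

Definition game_ok : Prop :=
  (forall i, (0 < #|A i|)%N) /\ (forall a, 0 <= W a).

End Game.

From Pilot Require Import Defs.
From HB Require Import structures.
From mathcomp Require Import all_boot all_order all_algebra.
From mathcomp Require Import reals.
From mathcomp Require Import ring lra.
From mathcomp Require Import boolp.
Set Implicit Arguments. Unset Strict Implicit. Unset Printing Implicit Defensive.
Import Order.TTheory GRing.Theory Num.Theory.
Local Open Scope ring_scope.

(* On the profiles {1,2} x {1,2} player 0 wants to match and player 1 to
   mismatch, so best responses there run around a 4-cycle of welfare-0 profiles
   (matching pennies), while all other profiles have welfare 1.  Action 0 is an
   outside option paying 3 against a penny: this is never a best response
   inside the cycle (a penny pays 4), yet it makes the game smooth.  From every
   profile best responses enter the cycle, so the cycle is the only sink and
   its stationary distribution, the uniform one, has expected welfare 0. *)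

Section BestResponseProcess.
Variables (R : realType) (n : nat) (A : 'I_n -> finType).
Local Notation profile := {dffun forall i : 'I_n, A i}.
Variable U : 'I_n -> profile -> R.

Lemma trans_gt0 (a b : profile) :
  (0 < trans U a b) = [exists i, b \in BRset U i a].
Proof.
set t := fun i : 'I_n =>
  n%:R^-1 * (if b \in BRset U i a then #|BRset U i a|%:R^-1 else 0) : R.
have t_ge0 i : 0 <= t i.
  by rewrite /t; case: ifP => _; rewrite ?mulr0 // mulr_ge0 ?invr_ge0 ?ler0n.
have -> : trans U a b = \sum_i t i by [].
rewrite lt0r sumr_ge0 ?andbT // psumr_neq0 //.
apply/hasP/existsP => [[i _]|[i BRi]].
  by rewrite /t; case: ifP => [BRi _|_]; [exists i | rewrite mulr0 ltxx].
have n_gt0 : (0 < n)%N by apply: leq_ltn_trans (ltn_ord i).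
exists i; rewrite ?mem_index_enum // /t BRi.
by rewrite mulr_gt0 // invr_gt0 ltr0n //; apply/card_gt0P; exists b.
Qed.

Lemma reach_BR i (a b : profile) : b \in BRset U i a -> reach U a b.
Proof. by move=> BRb; apply: connect1; rewrite /= trans_gt0; apply/existsP; exists i. Qed.

Lemma reach_trans (a b c : profile) : reach U a b -> reach U b c -> reach U a c.
Proof. exact: connect_trans. Qed.

Section ClosedSet.
Variable C : pred profile.
Hypothesis C_closed : forall i a b, C a -> b \in BRset U i a -> C b.

Lemma reach_closed a b : C a -> reach U a b -> C b.
Proof.
move=> Ca /connectP[p + ->] {b}; elim: p a Ca => //= x p IH a Ca /andP[ax].
apply: IH; move: ax; rewrite trans_gt0 => /existsP[i]; exact: C_closed.
Qed.

Lemma sink_scc_sub c S :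
  C c -> (forall a, reach U a c) -> sink_scc U S -> {subset S <= C}.
Proof.
move=> Cc to_c [/set0Pn[a0 Sa0] [S_conn S_closed]] b Sb.
have Sc : c \in S := S_closed a0 c Sa0 (to_c a0).
exact: reach_closed Cc (S_conn c b Sc Sb).
Qed.

End ClosedSet.

Lemma BRset_scale c i a : 0 < c -> BRset (fun j x => c * U j x) i a = BRset U i a.
Proof.
move=> c_gt0; apply/setP => b; rewrite !inE.
by congr (_ && _); apply: eq_forallb => d; rewrite ler_pM2l.
Qed.

Lemma sink_eq_scale c : 0 < c -> sink_eq (fun i a => c * U i a) = sink_eq U.
Proof.
move=> c_gt0; have trans_scale : trans (fun i a => c * U i a) = trans U.
  apply: funext => a; apply: funext => b.
  by apply: eq_bigr => i _; rewrite BRset_scale.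
by rewrite /sink_eq /stationary /sink_scc /reach trans_scale.
Qed.

End BestResponseProcess.

Lemma sum_ord2 (R : realType) (F : 'I_2 -> R) : \sum_(i < 2) F i = F ord0 + F ord_max.
Proof. by rewrite big_ord_recl big_ord1; congr (_ + F _); apply: val_inj. Qed.

Lemma trans2_singletons (R : realType) (A : 'I_2 -> finType)
    (U : 'I_2 -> {dffun forall i : 'I_2, A i} -> R) a p q b :
  BRset U ord0 a = [set p] -> BRset U ord_max a = [set q] ->
  trans U a b = 2^-1 * (b == p)%:R + 2^-1 * (b == q)%:R.
Proof.
move=> BR0 BR1; rewrite /trans sum_ord2 BR0 BR1 !cards1 !inE.
by case: (b == p); case: (b == q); rewrite ?invr1 ?mulr0.
Qed.

Definition i0 : 'I_3 := ord0.
Definition i1 : 'I_3 := @Ordinal 3 1 isT.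
Definition i2 : 'I_3 := ord_max.

Lemma ord2P (i : 'I_2) : i = ord0 \/ i = ord_max.
Proof. by case: i => [[|[|m]]] // ?; [left | right]; apply: val_inj. Qed.

Lemma ord3P (x : 'I_3) : [\/ x = i0, x = i1 | x = i2].
Proof. by case: x => [[|[|[|m]]]] // ?; [apply: Or31 | apply: Or32 | apply: Or33]; apply: val_inj. Qed.

Lemma forall3 (P : pred 'I_3) : [forall x, P x] = [&& P i0, P i1 & P i2].
Proof. by apply/forallP/and3P => [|[? ? ?] x]; [split | case: (ord3P x) => ->]. Qed.

Definition Act : 'I_2 -> finType := fun=> 'I_3.
Definition profile := {dffun forall i : 'I_2, Act i}.
Definition mk (x y : 'I_3) : profile := [ffun i => if i == ord0 then x else y].
Definition X (a : profile) : 'I_3 := a ord0.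
Definition Y (a : profile) : 'I_3 := a ord_max.

Lemma XE x y : X (mk x y) = x. Proof. by rewrite /X ffunE. Qed.
Lemma YE x y : Y (mk x y) = y. Proof. by rewrite /Y ffunE. Qed.

Lemma mkK a : mk (X a) (Y a) = a.
Proof. by apply/ffunP => i; rewrite ffunE; case: (ord2P i) => ->. Qed.

Lemma mk_eq x y x' y' : (mk x y == mk x' y') = (x == x') && (y == y').
Proof.
apply/eqP/andP => [eq_mk|[/eqP-> /eqP->]] //.
by move: (congr1 X eq_mk) (congr1 Y eq_mk); rewrite !XE !YE => -> ->.
Qed.

Lemma upd0 a c : upd a ord0 c = mk (X c) (Y a).
Proof. by apply/ffunP => i; rewrite !ffunE; case: (ord2P i) => ->. Qed.

Lemma upd1 a c : upd a ord_max c = mk (X a) (Y c).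
Proof. by apply/ffunP => i; rewrite !ffunE; case: (ord2P i) => ->. Qed.

Definition payoff0 (x y : 'I_3) : nat :=
  if y == i0 then 0 else if x == i0 then 3 else if x == y then 4 else 0.
Definition payoff1 (x y : 'I_3) : nat :=
  if x == i0 then 0 else if y == i0 then 3 else if x != y then 4 else 0.

Definition in_cycle (a : profile) : bool := (X a != i0) && (Y a != i0).
Definition flip (x : 'I_3) : 'I_3 := if x == i1 then i2 else i1.

Definition c11 := mk i1 i1.
Definition c12 := mk i1 i2.
Definition c22 := mk i2 i2.
Definition c21 := mk i2 i1.

Lemma in_cycle_mk x y : in_cycle (mk x y) = (x != i0) && (y != i0).
Proof. by rewrite /in_cycle XE YE. Qed.

Lemma flip_neq0 x : flip x != i0.
Proof. by rewrite /flip; case: ifP. Qed.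

Section Pennies.
Variable R : realType.

Definition utility (i : 'I_2) (a : profile) : R :=
  (if i == ord0 then payoff0 (X a) (Y a) else payoff1 (X a) (Y a))%:R.

Definition welfare (a : profile) : R := if in_cycle a then 0 else 1.

Lemma BR0P a b : (b \in BRset utility ord0 a) =
  (Y b == Y a) && [forall x, payoff0 x (Y a) <= payoff0 (X b) (Y a)]%N.
Proof.
rewrite inE; apply/andP/andP => [[/forallP others /forallP best]|[/eqP Yb /forallP best]].
  have Yb : Y b = Y a by apply/eqP/(implyP (others ord_max)).
  split; first by rewrite Yb.
  by apply/forallP => x; move: (best (mk x (Y a))); rewrite upd0 /utility /= ler_nat !XE !YE Yb.
split; first by apply/forallP => j; case: (ord2P j) => -> //=; apply/eqP.
by apply/forallP => c; rewrite upd0 /utility /= ler_nat !XE !YE Yb.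
Qed.

Lemma BR1P a b : (b \in BRset utility ord_max a) =
  (X b == X a) && [forall y, payoff1 (X a) y <= payoff1 (X a) (Y b)]%N.
Proof.
rewrite inE; apply/andP/andP => [[/forallP others /forallP best]|[/eqP Xb /forallP best]].
  have Xb : X b = X a by apply/eqP/(implyP (others ord0)).
  split; first by rewrite Xb.
  by apply/forallP => y; move: (best (mk (X a) y)); rewrite upd1 /utility /= ler_nat !XE !YE Xb.
split; first by apply/forallP => j; case: (ord2P j) => -> //=; apply/eqP.
by apply/forallP => c; rewrite upd1 /utility /= ler_nat !XE !YE Xb.
Qed.

Lemma BR_match a : Y a != i0 -> BRset utility ord0 a = [set mk (Y a) (Y a)].
Proof.
move=> Ya; apply/setP => b; rewrite BR0P inE -[b]mkK mk_eq !XE !YE forall3.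
case: (ord3P (Y a)) Ya => -> // _.
all: by case: (ord3P (X b)) => ->; case: (ord3P (Y b)) => ->.
Qed.

Lemma BR_mismatch a : X a != i0 -> BRset utility ord_max a = [set mk (X a) (flip (X a))].
Proof.
move=> Xa; apply/setP => b; rewrite BR1P inE -[b]mkK mk_eq !XE !YE forall3.
case: (ord3P (X a)) Xa => -> // _.
all: by case: (ord3P (X b)) => ->; case: (ord3P (Y b)) => ->.
Qed.

Lemma BR_origin : mk i1 i0 \in BRset utility ord0 (mk i0 i0).
Proof. by rewrite BR0P !XE !YE forall3. Qed.

Lemma BR_in_cycle i a b : in_cycle a -> b \in BRset utility i a -> in_cycle b.
Proof.
move=> /andP[Xa Ya]; case: (ord2P i) => ->;
  [rewrite BR_match | rewrite BR_mismatch] => // /set1P ->;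
  by rewrite in_cycle_mk ?Xa ?Ya ?flip_neq0.
Qed.

Lemma reach_match x y : y != i0 -> reach utility (mk x y) (mk y y).
Proof. by move=> y0; apply: (@reach_BR _ _ _ _ ord0); rewrite BR_match YE // set11. Qed.

Lemma reach_mismatch x y : x != i0 -> reach utility (mk x y) (mk x (flip x)).
Proof. by move=> x0; apply: (@reach_BR _ _ _ _ ord_max); rewrite BR_mismatch XE // set11. Qed.

Lemma reach_cycle (a : profile) : exists2 s, in_cycle s & reach utility a s.
Proof.
rewrite -[a]mkK; have [Y0|Ya] := eqVneq (Y a) i0; last first.
  by exists (mk (Y a) (Y a)); [rewrite in_cycle_mk Ya | exact: reach_match].
have [X0|Xa] := eqVneq (X a) i0; last first.
  by exists (mk (X a) (flip (X a))); [rewrite in_cycle_mk Xa flip_neq0 | exact: reach_mismatch].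
exists (mk i1 (flip i1)); first by rewrite in_cycle_mk.
rewrite X0 Y0; apply: reach_trans (reach_BR BR_origin) _.
exact: reach_mismatch.
Qed.

Lemma reach_cycle_round :
  [/\ reach utility c11 c12, reach utility c12 c22,
      reach utility c22 c21 & reach utility c21 c11].
Proof.
by split; [apply: reach_mismatch | apply: reach_match | apply: reach_mismatch | apply: reach_match].
Qed.

Lemma cycle_reach_c11 s : in_cycle s -> reach utility s c11.
Proof.
have [_ r12 r22 r21] := reach_cycle_round.
rewrite -[s]mkK in_cycle_mk.
case: (ord3P (X s)) => ->; case: (ord3P (Y s)) => -> // _.
- exact: connect0.
- exact: reach_trans r12 (reach_trans r22 r21).
- exact: reach_trans r22 r21.
Qed.

Lemma c11_reach_cycle s : in_cycle s -> reach utility c11 s.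
Proof.
have [r11 r12 r22 _] := reach_cycle_round.
rewrite -[s]mkK in_cycle_mk.
case: (ord3P (X s)) => ->; case: (ord3P (Y s)) => -> // _.
- exact: connect0.
- exact: reach_trans r11 (reach_trans r12 r22).
- exact: reach_trans r11 r12.
Qed.

Lemma reach_c11 a : reach utility a c11.
Proof. by have [s in_s a_s] := reach_cycle a; exact: reach_trans a_s (cycle_reach_c11 in_s). Qed.

Lemma trans_cycle s b : in_cycle s ->
  trans utility s b = 2^-1 * (b == mk (Y s) (Y s))%:R + 2^-1 * (b == mk (X s) (flip (X s)))%:R.
Proof. by move=> /andP[Xs Ys]; apply: trans2_singletons; [apply: BR_match | apply: BR_mismatch]. Qed.

Lemma sum_cycle (f : profile -> R) : (forall a, ~~ in_cycle a -> f a = 0) ->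
  \sum_a f a = f c11 + f c12 + f c22 + f c21.
Proof.
move=> f0; rewrite (reindex (fun p : 'I_3 * 'I_3 => mk p.1 p.2)) /=; last first.
  by exists (fun a => (X a, Y a)) => [[x y] _ | a _] /=; rewrite ?XE ?YE ?mkK.
rewrite -(pair_big xpredT xpredT (fun x y => f (mk x y))) /=.
have sum3 (F : 'I_3 -> R) : \sum_x F x = F i0 + F i1 + F i2.
  by rewrite !big_ord_recl big_ord0 addr0 addrA; congr (_ + F _ + F _); apply: val_inj.
rewrite !sum3 !(f0 (mk i0 _)) ?(f0 (mk i1 i0)) ?(f0 (mk i2 i0)) ?in_cycle_mk //.
by rewrite /c11 /c12 /c22 /c21 !add0r; ring.
Qed.

Lemma flow_into_cycle (tau : profile -> R) b : (forall a, ~~ in_cycle a -> tau a = 0) ->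
  \sum_a tau a * trans utility a b =
  2^-1 * (tau c11 * ((b == c11)%:R + (b == c12)%:R) + tau c12 * ((b == c12)%:R + (b == c22)%:R)
        + tau c22 * ((b == c22)%:R + (b == c21)%:R) + tau c21 * ((b == c21)%:R + (b == c11)%:R)).
Proof.
move=> tau_out; rewrite sum_cycle => [|a /tau_out ->]; last by rewrite mul0r.
rewrite !trans_cycle ?in_cycle_mk // /c11 /c12 /c22 /c21 !XE !YE /flip /=; ring.
Qed.

Definition uniform (a : profile) : R := if in_cycle a then 4^-1 else 0.

Lemma sink_eq_uniform tau : sink_eq utility tau -> tau = uniform.
Proof.
move=> [[_ [tau_sum tau_stat]] tau_sink].
have tau_out a : ~~ in_cycle a -> tau a = 0.
  apply: contraNeq => tau_a.
  by apply: (sink_scc_sub BR_in_cycle _ reach_c11 tau_sink); rewrite ?inE ?in_cycle_mk.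
move: (tau_stat c11) (tau_stat c12) (tau_stat c22) (tau_stat c21).
rewrite !flow_into_cycle // (sum_cycle tau_out) in tau_sum *.
rewrite /c11 /c12 /c22 /c21 !mk_eq /= => e11 e12 e22 e21.
apply: funext => a; rewrite /uniform; case: ifP => [|/negbT]; last exact: tau_out.
rewrite -[a]mkK in_cycle_mk; case: (ord3P (X a)) => ->; case: (ord3P (Y a)) => -> // _; lra.
Qed.

Lemma uniform_sink_eq : sink_eq utility uniform.
Proof.
have uniform_out a : ~~ in_cycle a -> uniform a = 0 by rewrite /uniform => /negbTE ->.
have supp_uniform : Defs.support uniform = [set a | in_cycle a].
  by apply/setP => a; rewrite !inE /uniform; case: ifP; rewrite ?eqxx ?invr_eq0 ?pnatr_eq0.
split; [split; [|split] | rewrite supp_uniform; split; [|split]].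
- by move=> a; rewrite /uniform; case: ifP; rewrite ?invr_ge0 ?ler0n.
- by rewrite (sum_cycle uniform_out) /uniform /c11 /c12 /c22 /c21 !in_cycle_mk /=; lra.
- move=> b; rewrite flow_into_cycle // -[b]mkK.
  by case: (ord3P (X b)) => ->; case: (ord3P (Y b)) => ->;
    rewrite /uniform /c11 /c12 /c22 /c21 !in_cycle_mk !mk_eq /=; lra.
- by apply/set0Pn; exists c11; rewrite inE in_cycle_mk.
- move=> a b; rewrite !inE => /cycle_reach_c11 a_c11 /c11_reach_cycle.
  exact: reach_trans.
- by move=> a b; rewrite !inE; exact: (reach_closed BR_in_cycle).
Qed.

Lemma expW_uniform : expW welfare uniform = 0.
Proof. by apply: big1 => a _; rewrite /uniform /welfare; case: ifP; rewrite ?mulr0 ?mul0r. Qed.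

(* In the cycle the deviation gains add up to 4 c - 6 c = -2 c <= - lambda for
   the scale c = lambda + 1; elsewhere they are <= 0 < mu - lambda. *)
Lemma smooth_scaled lambda mu : 0 <= lambda -> lambda < mu ->
  smooth welfare (fun i a => (lambda + 1) * utility i a) lambda mu (mk i0 i0).
Proof.
move=> l_ge0 l_lt_mu; split; first lra; split=> // a.
rewrite sum_ord2 upd0 upd1 /welfare /utility /in_cycle /= !XE !YE.
by case: (ord3P (X a)) => ->; case: (ord3P (Y a)) => ->; rewrite /payoff0 /payoff1 /=; lra.
Qed.

End Pennies.

Theorem proposition3 (R : realType) (lambda mu : R) :
  0 <= lambda -> lambda < mu ->
  exists (A : 'I_2 -> finType)
         (W : {dffun forall i : 'I_2, A i} -> R)
         (U : 'I_2 -> {dffun forall i : 'I_2, A i} -> R)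
         (astar : {dffun forall i : 'I_2, A i}),
    [/\ game_ok W, welfare_max W astar, 0 < W astar,
        smooth W U lambda mu astar &
        (unique_sink_eq U /\ PoS_eq W U astar 0)].
Proof.
move=> l_ge0 l_lt_mu; have c_gt0 : 0 < lambda + 1 by lra.
exists Act, (welfare R), (fun i a => (lambda + 1) * utility R i a), (mk i0 i0).
rewrite /unique_sink_eq /PoS_eq sink_eq_scale //.
have W_origin : welfare R (mk i0 i0) = 1 by rewrite /welfare in_cycle_mk.
have W_ge0 a : 0 <= welfare R a by rewrite /welfare; case: ifP.
split.
- by split=> [i|]; [rewrite card_ord | exact: W_ge0].
- by move=> a; rewrite W_origin /welfare; case: ifP.
- by rewrite W_origin.
- exact: smooth_scaled.
split; first by exists (uniform R); split; [exact: uniform_sink_eq | exact: sink_eq_uniform].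
split.
- exists (uniform R); split; first exact: uniform_sink_eq.
  by rewrite W_origin expW_uniform mul0r.
- move=> tau [[tau_ge0 _] _]; rewrite W_origin divr1.
  by apply: sumr_ge0 => a _; exact: mulr_ge0 (tau_ge0 a) (W_ge0 a).
Qed.
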